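(* Let $\mathcal{C}[\cdot]$ be a certified admitted linear guarded one-hole context with hole type $\mathbb{B}_{M_Y}(Y)\to\mathbb{B}_{M_X}(X)$, with perturbation gain $L(\mathcal{C})<\infty$ and closed-context contraction modulus $\kappa(\mathcal{C})<1$. Let $\mathsf{M},\mathsf{N}$ be components whose transformers $\mathcal{T}_{\mathsf M},\mathcal{T}_{\mathsf N}:\mathbb{B}_{M_Y}(Y)\to\mathbb{B}_{M_X}(X)$ have this hole type, with all side components and certificates identical in the two circuits $\mathcal{C}[\mathsf M]$, $\mathcal{C}[\mathsf N]$, and assume the induced closed-loop operators $\mathcal{T}_{\mathcal{C}[\mathsf M]},\mathcal{T}_{\mathcal{C}[\mathsf N]}$ are self-maps of a common ball $\mathbb{B}_M(S)$ and are $\kappa(\mathcal{C})$-contractions there; let $V_{\mathcal{C}[\mathsf M]},V_{\mathcal{C}[\mathsf N]}$ be their unique fixed points. If $d_\infty^{X\leftarrow Y}(\mathcal{T}_{\mathsf M},\mathcal{T}_{\mathsf N})\le\varepsilon$, then \[\|V_{\mathcal{C}[\mathsf M]}-V_{\mathcal{C}[\mathsf N]}\|_\infty\le\frac{L(\mathcal{C})}{1-\kappa(\mathcal{C})}\,\varepsilon.\]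
   Context: For a measurable space $X$, $\mathcal{B}(X)$ is the space of bounded measurable real functions with sup norm and $\mathbb{B}_M(X):=\{V\in\mathcal{B}(X):\|V\|_\infty\le M\}$. For typed transformers $T,T':\mathbb{B}_{M_Y}(Y)\to\mathbb{B}_{M_X}(X)$, $d_\infty^{X\leftarrow Y}(T,T'):=\sup_{V\in\mathbb{B}_{M_Y}(Y)}\|TV-T'V\|_\infty$ (written $d_\infty^{(S,M)}$ when $X=Y=S$, $M_X=M_Y=M$). A linear one-hole context is a well-typed expression generated by $\mathcal{C}::=[\cdot]\mid T_0\circ\mathcal{C}\mid\mathcal{C}\circ T_0\mid\mathcal{C}\otimes T_0\mid T_0\otimes\mathcal{C}\mid\mathsf{Tr}^Z(\mathcal{D})$, where $T_0$ are fixed side transformers, $\otimes$ uses the product sup metric, $\mathsf{Tr}^Z$ is the guarded Banach trace (for $F=(F_Y,F_Z):X\times Z\to Y\times Z$ with $F_Z$ uniformly contractive in $z$, $\mathsf{Tr}^Z(F)(x)=F_Y(x,z_x)$ where $z_x=F_Z(x,z_x)$ is the unique fixed point), and the hole occurs exactly once (no copying, merging, or nonlinear inspection of the hole). It is certified/admitted if every subexpression carries invariant source/target balls, Lipschitz constants for side transformers, uniform guardedness constants at each trace node, and a finite perturbation gain $L(\mathcal{C})$ with the property that $d_\infty^{(S,M)}(\mathcal{T}_{\mathcal{C}[\mathsf M]},\mathcal{T}_{\mathcal{C}[\mathsf N]})\le L(\mathcal{C})\,d_\infty^{X\leftarrow Y}(\mathcal{T}_{\mathsf M},\mathcal{T}_{\mathsf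 N})$ for all compatible components $\mathsf M,\mathsf N$ with the hole type, and (for a closed context) a contraction modulus $\kappa(\mathcal{C})<1$ of the induced closed-loop operator on its invariant ball. *)

From HB Require Import structures.
From mathcomp Require Import all_boot all_order all_algebra.
From mathcomp Require Import all_classical all_reals.
From mathcomp Require Import all_analysis.
Set Implicit Arguments. Unset Strict Implicit. Unset Printing Implicit Defensive.
Import Order.TTheory GRing.Theory Num.Theory.
Local Open Scope classical_set_scope.
Local Open Scope ring_scope.

Section Defs.
Variable R : realType.

Definition bounded_meas d (X : measurableType d) (V : X -> R) : Prop :=
  measurable_fun setT V /\ exists C : R, forall x, `|V x| <= C.

Definition supnorm (X : Type) (V : X -> R) : R := sup [set `|V x| | x in setT].

Definition in_ball d (X : measurableType d) (M : R) (V : X -> R) : Prop :=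
  bounded_meas V /\ supnorm V <= M.

Definition transformer dX dY (X : measurableType dX) (Y : measurableType dY)
  (MY MX : R) (T : (Y -> R) -> (X -> R)) : Prop :=
  forall V, in_ball MY V -> in_ball MX (T V).

Definition dinf dX dY (X : measurableType dX) (Y : measurableType dY)
  (MY : R) (T T' : (Y -> R) -> (X -> R)) : R :=
  sup [set supnorm (T V \- T' V) | V in [set V | in_ball MY V]].

Definition contraction_on d (S : measurableType d) (M kappa : R)
  (F : (S -> R) -> (S -> R)) : Prop :=
  transformer M M F /\
  forall U V, in_ball M U -> in_ball M V ->
    supnorm (F U \- F V) <= kappa * supnorm (U \- V).

Definition fixed_point_in d (S : measurableType d) (M : R)
  (F : (S -> R) -> (S -> R)) (V : S -> R) : Prop :=
  in_ball M V /\ F V = V.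

(* Certification data of a closed linear one-hole context, abstracted as the
   plugging map [plug] sending a hole transformer T_M to the closed-loop
   operator T_{C[M]} on B_M(S), with finite perturbation gain L and
   contraction modulus kappa < 1. *)
Definition certified_context dX dY dS (X : measurableType dX)
  (Y : measurableType dY) (S : measurableType dS) (MY MX M L kappa : R)
  (plug : ((Y -> R) -> (X -> R)) -> ((S -> R) -> (S -> R))) : Prop :=
  0 <= L /\ 0 <= kappa /\ kappa < 1 /\
  forall T T', transformer MY MX T -> transformer MY MX T' ->
    dinf M (plug T) (plug T') <= L * dinf MY T T'.

End Defs.

From HB Require Import structures.
From mathcomp Require Import all_boot all_order all_algebra.
From mathcomp Require Import all_classical all_reals.
From mathcomp Require Import all_analysis.
From mathcomp Require Import lra.
Import Order.TTheory GRing.Theory Num.Theory.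
Local Open Scope classical_set_scope.
Local Open Scope ring_scope.

(* Writing V_M - V_N = (T_{C[M]} V_M - T_{C[N]} V_M) + (T_{C[N]} V_M - T_{C[N]} V_N),
   the second term is at most kappa ||V_M - V_N|| by contractivity and the first
   at most d(T_{C[M]}, T_{C[N]}) <= L eps by the perturbation gain; absorbing the
   kappa-term on the left gives the bound L eps / (1 - kappa). *)

Set Implicit Arguments. Unset Strict Implicit.

Section SupNorm.
Variable R : realType.

Definition norm_bounded (T : Type) (f : T -> R) := exists C, forall x, `|f x| <= C.

Lemma norm_bounded_sub (T : Type) (f g : T -> R) :
  norm_bounded f -> norm_bounded g -> norm_bounded (f \- g).
Proof.
move=> [C1 f_le] [C2 g_le]; exists (C1 + C2) => x.
by apply: le_trans (ler_normB _ _) _; apply: lerD.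
Qed.

Lemma in_ball_norm_bounded d (X : measurableType d) M (V : X -> R) :
  in_ball M V -> norm_bounded V.
Proof. by case=> [[_ V_bd] _]. Qed.

Lemma supnorm_ub (T : Type) (f : T -> R) x :
  norm_bounded f -> `|f x| <= supnorm f.
Proof.
move=> [C f_le]; apply: ub_le_sup; last by exists x.
by exists C => _ [y _ <-].
Qed.

(* [sup set0 = 0], hence the hypothesis [0 <= C] for an empty domain. *)
Lemma supnorm_le (T : Type) (f : T -> R) C :
  (forall x, `|f x| <= C) -> 0 <= C -> supnorm f <= C.
Proof.
move=> f_le C_ge0; rewrite /supnorm.
have [->|/set0P ne] := eqVneq [set `|f x| | x in [set: T]] set0.
  by rewrite sup0.
by apply: ge_sup => // _ [y _ <-].
Qed.

Lemma supnorm_ge0 (T : Type) (f : T -> R) : norm_bounded f -> 0 <= supnorm f.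
Proof.
move=> f_bd; rewrite /supnorm.
have [->|/set0P [_ [x _ _]]] := eqVneq [set `|f x| | x in [set: T]] set0.
  by rewrite sup0.
exact: le_trans (normr_ge0 (f x)) (supnorm_ub x f_bd).
Qed.

Lemma supnorm_le_sum (T : Type) (f g h : T -> R) :
  norm_bounded f -> norm_bounded g ->
  (forall x, `|h x| <= `|f x| + `|g x|) -> supnorm h <= supnorm f + supnorm g.
Proof.
move=> f_bd g_bd h_le; apply: supnorm_le; last by rewrite addr_ge0 ?supnorm_ge0.
by move=> x; apply: le_trans (h_le x) _; apply: lerD; apply: supnorm_ub.
Qed.

Lemma supnorm_le_dinf dX dY (X : measurableType dX) (Y : measurableType dY)
    MY MX (T T' : (Y -> R) -> (X -> R)) V :
  transformer MY MX T -> transformer MY MX T' -> in_ball MY V ->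
  supnorm (T V \- T' V) <= dinf MY T T'.
Proof.
move=> tT tT' V_ball; apply: ub_le_sup; last by exists V.
exists (MX + MX) => _ [W W_ball <-].
have [TW_ball T'W_ball] := (tT W W_ball, tT' W W_ball).
apply: le_trans (_ : supnorm (T W) + supnorm (T' W) <= _).
  apply: supnorm_le_sum (in_ball_norm_bounded TW_ball)
    (in_ball_norm_bounded T'W_ball) _.
  by move=> x; apply: ler_normB.
by apply: lerD; [exact: TW_ball.2 | exact: T'W_ball.2].
Qed.

Lemma contraction_fixed_point_dist d (S : measurableType d) M kappa
    (F G : (S -> R) -> (S -> R)) u v :
  transformer M M F -> contraction_on M kappa G -> kappa < 1 ->
  fixed_point_in M F u -> fixed_point_in M G v ->
  supnorm (u \- v) <= supnorm (F u \- G u) / (1 - kappa).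
Proof.
move=> F_self [G_self G_contr] kappa_lt1 [u_ball Fu] [v_ball Gv].
have [Fu_bd Gu_bd Gv_bd] : [/\ norm_bounded (F u), norm_bounded (G u)
    & norm_bounded (G v)].
  by split; apply: in_ball_norm_bounded; [exact: F_self | exact: G_self..].
have split_le : supnorm (u \- v) <= supnorm (F u \- G u) + kappa * supnorm (u \- v).
  apply: le_trans (lerD (lexx _) (G_contr u v u_ball v_ball)).
  apply: supnorm_le_sum (norm_bounded_sub Fu_bd Gu_bd) (norm_bounded_sub Gu_bd Gv_bd) _.
  move=> x; rewrite /= -{1}Fu -{1}Gv.
  by rewrite -[F u x - G v x](subrKA (G u x)) ler_normD.
rewrite ler_pdivlMr ?subr_gt0 //.
move: split_le; set s := supnorm (u \- v); set a := supnorm _; nra.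
Qed.

End SupNorm.

Theorem theorem5 (R : realType) (dX dY dS : measure_display)
  (X : measurableType dX) (Y : measurableType dY) (S : measurableType dS)
  (MY MX M L kappa eps : R)
  (plug : ((Y -> R) -> (X -> R)) -> ((S -> R) -> (S -> R)))
  (TM TN : (Y -> R) -> (X -> R)) (VM VN : S -> R) :
  certified_context MY MX M L kappa plug ->
  transformer MY MX TM -> transformer MY MX TN ->
  contraction_on M kappa (plug TM) -> contraction_on M kappa (plug TN) ->
  fixed_point_in M (plug TM) VM -> fixed_point_in M (plug TN) VN ->
  dinf MY TM TN <= eps ->
  supnorm (VM \- VN) <= L / (1 - kappa) * eps.
Proof.
move=> [L_ge0 [_ [kappa_lt1 gain]]] tM tN [selfM _] contrN fixM fixN dist_le.
apply: le_trans (contraction_fixed_point_dist selfM contrN kappa_lt1 fixM fixN) _.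
rewrite mulrAC ler_pM2r ?invr_gt0 ?subr_gt0 //.
apply: le_trans (supnorm_le_dinf selfM contrN.1 fixM.1) _.
apply: le_trans (gain _ _ tM tN) _.
exact: ler_wpM2l.
Qed.
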